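(* Let $X\in[0,1]^{N\times N}$ satisfy $\|D^TX\|_0+\|XD\|_0\leq s$ for some $s<2N^2$. Let $Q_{2D}(X)$ be the two-dimensional first-order $\Sigma\Delta$ quantization of $X$ with an alphabet of step size $\delta$, whose state matrix $u$ satisfies $X-Q_{2D}(X)=DuD^T$ and $\|u\|_{\max}\leq\delta/2$. Let $\hat X$ be a solution to $$\min_{Z\in\mathbb{R}^{N\times N}}\|D^TZ\|_1+\|ZD\|_1\quad\text{subject to}\quad\|D^{-1}(Z-Q_{2D}(X))(D^{-1})^T\|_{\max}\leq\delta/2.$$ Then $\|\hat X-X\|_F\leq C\sqrt{s}\,\delta$ for some absolute constant $C$.
   Context: $D$ is the $N\times N$ matrix with $1$ on the diagonal, $-1$ on the subdiagonal, $0$ elsewhere. For matrices, $\|\cdot\|_1$ is the entrywise $\ell_1$ norm, $\|\cdot\|_0$ the number of nonzero entries, $\|\cdot\|_{\max}$ the largest absolute entry. The two-dimensional first-order $\Sigma\Delta$ quantization with a finite alphabet $\mathcal{A}$ (step size $\delta$): with $u_{i,0}=u_{0,j}=0$, for $i,j\geq1$ set $q_{i,j}=Q_{\mathcal{A}}(u_{i,j-1}+u_{i-1,j}-u_{i-1,j-1}+X_{i,j})$ and $u_{i,j}=u_{i,j-1}+u_{i-1,j}-u_{i-1,j-1}+X_{i,j}-q_{i,j}$, where $Q_{\mathcal{A}}(z)$ is a nearest element of $\mathcal{A}$ to $z$; then $Q_{2D}(X)=q$ and $X-q=DuD^T$. The alphabet is assumed such that the scheme is stable with $\|u\|_{\max}\leq\delta/2$.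 *)

From HB Require Import structures.
From mathcomp Require Import all_boot all_order all_algebra.
From mathcomp Require Import reals.
Set Implicit Arguments. Unset Strict Implicit. Unset Printing Implicit Defensive.
Import Order.TTheory GRing.Theory Num.Theory.
Local Open Scope ring_scope.

Section Defs.
Variable R : realType.

Definition Dmx (N : nat) : 'M[R]_N :=
  \matrix_(i, j) (if i == j :> nat then 1 else if i == (j.+1) :> nat then -1 else 0).

Definition mxl1 m n (A : 'M[R]_(m, n)) : R := \sum_i \sum_j `|A i j|.
Definition mxl0 m n (A : 'M[R]_(m, n)) : nat := #|[set ij : 'I_m * 'I_n | A ij.1 ij.2 != 0]|.
Definition mxmax m n (A : 'M[R]_(m, n)) : R := \big[Num.max/0]_i \big[Num.max/0]_j `|A i j|.
Definition mxfrob m n (A : 'M[R]_(m, n)) : R := Num.sqrt (\sum_i \sum_j (A i j) ^+ 2).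

(* 1-indexed access to a matrix, 0 outside the index range *)
Definition mxfun N (A : 'M[R]_N) (i j : nat) : R :=
  match (insub i.-1 : option 'I_N), (insub j.-1 : option 'I_N) with
  | Some i', Some j' => A i' j'
  | _, _ => 0
  end.

(* state u_{i,j} of the 2D first-order Sigma-Delta scheme, 1-indexed,
   u_{i,0} = u_{0,j} = 0 *)
Fixpoint sd_u (Q : R -> R) (x : nat -> nat -> R) (i : nat) : nat -> R :=
  match i with
  | 0 => fun _ => 0
  | i'.+1 =>
      let prev := sd_u Q x i' in
      fix row (j : nat) : R :=
        match j with
        | 0 => 0
        | j'.+1 => let v := row j' + prev j - prev j' + x i j in v - Q v
        end
  end.

Definition sd_q (Q : R -> R) (x : nat -> nat -> R) (i j : nat) : R :=
  Q (sd_u Q x i j.-1 + sd_u Q x i.-1 j - sd_u Q x i.-1 j.-1 + x i j).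

Definition Q2D N (Q : R -> R) (X : 'M[R]_N) : 'M[R]_N :=
  \matrix_(i, j) sd_q Q (mxfun X) i.+1 j.+1.

Definition SDstate N (Q : R -> R) (X : 'M[R]_N) : 'M[R]_N :=
  \matrix_(i, j) sd_u Q (mxfun X) i.+1 j.+1.

Definition alphabet (a0 delta : R) (L : nat) : seq R :=
  mkseq (fun k => a0 + k%:R * delta) L.

Definition nearest_quantizer (A : seq R) (Q : R -> R) : Prop :=
  forall z, Q z \in A /\ forall a, a \in A -> `|z - Q z| <= `|z - a|.

Definition tv_obj N (Z : 'M[R]_N) : R := mxl1 ((Dmx N)^T *m Z) + mxl1 (Z *m Dmx N).

Definition sd_feasible N (q : 'M[R]_N) (delta : R) (Z : 'M[R]_N) : Prop :=
  mxmax (invmx (Dmx N) *m (Z - q) *m (invmx (Dmx N))^T) <= delta / 2.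

End Defs.

(* Write E := Xhat - X as D W D^T with W := D^-1 E D^-T.  X is feasible as well,
   because D^-1 (X - Q2D X) D^-T is the Sigma-Delta state, so |W| <= delta
   entrywise and the entries of D^T E and E D are at most 8 delta.  As Xhat
   minimises the objective, the l1 mass of D^T E and E D is paid for by the at
   most s entries where D^T X and X D are nonzero, each costing at most
   2 * 8 delta: ||D^T E||_1 + ||E D||_1 <= 16 delta s.  Finally
   ||E||_F^2 = <D^T E D, W> <= delta ||D^T E D||_1 <= 2 delta ||D^T E||_1
   <= 32 delta^2 s <= (6 delta sqrt s)^2. *)

From HB Require Import structures.
From mathcomp Require Import all_boot all_order all_algebra.
From mathcomp Require Import reals.
From mathcomp Require Import ring lra.
Import Order.TTheory GRing.Theory Num.Theory.
Set Implicit Arguments. Unset Strict Implicit. Unset Printing Implicit Defensive.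
Local Open Scope ring_scope.

Section MatrixEntryBounds.
Variable R : numDomainType.

Lemma normr_mulmx_le m n p (M : 'M[R]_(m, n)) (A : 'M[R]_(n, p)) (a c : R) i j :
  0 <= c -> (forall k, \sum_l `|M k l| <= a) -> (forall k l, `|A k l| <= c) ->
  `|(M *m A) i j| <= a * c.
Proof.
move=> c_ge0 rowM boundA; rewrite mxE.
apply: le_trans (ler_norm_sum _ _ _) _.
apply: (le_trans (y := \sum_l `|M i l| * c)).
  by apply: ler_sum => l _; rewrite normrM ler_wpM2l.
by rewrite -mulr_suml ler_wpM2r.
Qed.

Lemma normr_mulmx_le_r m n p (A : 'M[R]_(m, n)) (M : 'M[R]_(n, p)) (a c : R) i j :
  0 <= c -> (forall l, \sum_k `|M k l| <= a) -> (forall k l, `|A k l| <= c) ->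
  `|(A *m M) i j| <= a * c.
Proof.
move=> c_ge0 colM boundA.
have -> : (A *m M) i j = (M^T *m A^T) j i by rewrite -trmx_mul [RHS]mxE.
apply: normr_mulmx_le => //.
- by move=> k; under eq_bigr do rewrite mxE.
- by move=> k l; rewrite mxE.
Qed.

Lemma sumr_eq_inj_le1 N (f : 'I_N -> nat) m : injective f -> \sum_k (f k == m)%:R <= 1 :> R.
Proof.
move=> f_inj; have -> : \sum_k (f k == m)%:R = #|[pred k | f k == m]|%:R :> R.
  by rewrite -sum1_card natr_sum [RHS]big_mkcond; apply: eq_bigr => k _; rewrite inE; case: eqP.
by rewrite lern1; apply/card_le1_eqP => x y /eqP fx /eqP fy; apply: f_inj; rewrite fx fy.
Qed.

End MatrixEntryBounds.

Section FrobeniusProduct.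
Variable R : comRingType.

Definition mxdot {m n} (A B : 'M[R]_(m, n)) : R := \sum_i \sum_j A i j * B i j.

Lemma mxdotE m n (A B : 'M[R]_(m, n)) : mxdot A B = \tr (A *m B^T).
Proof. by apply: eq_bigr => i _; rewrite mxE; apply: eq_bigr => j _; rewrite mxE. Qed.

Lemma mxdot_mulmx m n k l (A : 'M[R]_(m, n)) (M : 'M[R]_(m, k)) (W : 'M[R]_(k, l))
    (P : 'M[R]_(n, l)) :
  mxdot A (M *m W *m P^T) = mxdot (M^T *m A *m P) W.
Proof. by rewrite !mxdotE !trmx_mul trmxK !mulmxA mxtrace_mulC !mulmxA. Qed.

End FrobeniusProduct.

Section MatrixNorms.
Variable R : realType.

Lemma mxmax_ge m n (A : 'M[R]_(m, n)) i j : `|A i j| <= mxmax A.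
Proof.
apply: le_trans (le_bigmax _ (fun j => `|A i j|) j) _.
exact: (le_bigmax _ (fun i => \big[Num.max/0]_j `|A i j|) i).
Qed.

Lemma mxl1_ge0 m n (A : 'M[R]_(m, n)) : 0 <= mxl1 A.
Proof. by apply: sumr_ge0 => i _; apply: sumr_ge0. Qed.

Lemma mxl1_mulmx_le m n p (A : 'M[R]_(m, n)) (M : 'M[R]_(n, p)) (a : R) :
  (forall k, \sum_l `|M k l| <= a) -> mxl1 (A *m M) <= a * mxl1 A.
Proof.
move=> rowM; rewrite /mxl1 mulr_sumr; apply: ler_sum => i _.
apply: (le_trans (y := \sum_j \sum_k `|A i k| * `|M k j|)).
  apply: ler_sum => j _; rewrite mxE.
  by apply: le_trans (ler_norm_sum _ _ _) _; apply: ler_sum => k _; rewrite normrM.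
rewrite exchange_big /= mulr_sumr; apply: ler_sum => k _.
by rewrite -mulr_sumr mulrC ler_wpM2r.
Qed.

Lemma mxl0E m n (A : 'M[R]_(m, n)) :
  (mxl0 A)%:R = \sum_i \sum_j (A i j != 0)%:R :> R.
Proof.
rewrite /mxl0 -sum1_card natr_sum big_mkcond pair_big /=.
by apply: eq_bigr => -[i j] _; rewrite inE; case: ifP.
Qed.

(* Entrywise, [|a + p| >= |a| + |p| - 2 c] if [a != 0] and [|a + p| = |p|] if [a = 0]. *)
Lemma mxl1D_ge m n (A P : 'M[R]_(m, n)) (c : R) : (forall i j, `|P i j| <= c) ->
  mxl1 A + mxl1 P - 2 * c * (mxl0 A)%:R <= mxl1 (A + P).
Proof.
move=> boundP; rewrite mxl0E /mxl1 mulr_sumr -!big_split -sumrB /=.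
apply: ler_sum => i _; rewrite mulr_sumr -!big_split -sumrB /=.
apply: ler_sum => j _; rewrite mxE.
have := boundP i j; have := ler_normD (A i j + P i j) (- P i j).
by rewrite normrN addrK; case: eqP => [->|_] /=; rewrite ?add0r ?normr0; lra.
Qed.

Lemma mxdot_le_mxl1 m n (A B : 'M[R]_(m, n)) (c : R) : (forall i j, `|B i j| <= c) ->
  mxdot A B <= c * mxl1 A.
Proof.
move=> boundB; rewrite /mxl1 mulr_sumr; apply: ler_sum => i _.
rewrite mulr_sumr; apply: ler_sum => j _.
apply: le_trans (ler_norm _) _.
by rewrite normrM mulrC ler_wpM2r.
Qed.

End MatrixNorms.

Section DifferenceMatrix.
Variables (R : realType) (N : nat).
Local Notation D := (Dmx R N).

Lemma DmxE i j : D i j = (j == i :> nat)%:R - (j.+1 == i :> nat)%:R.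
Proof.
rewrite mxE eq_sym [(_ == _.+1)]eq_sym.
have [->|_] := eqVneq (j : nat) i; first by rewrite gtn_eqF ?subr0.
by case: eqP => _; rewrite /= ?sub0r ?subr0 ?oppr0.
Qed.

Lemma normr_Dmx i j : `|D i j| = (j == i :> nat)%:R + (j.+1 == i :> nat)%:R.
Proof.
have : (j == i :> nat) ==> (j.+1 != i :> nat).
  by apply/implyP => /eqP ->; rewrite gtn_eqF.
rewrite DmxE; case: (j == i :> nat); case: (j.+1 == i :> nat) => //= _.
- by rewrite subr0 addr0 normr1.
- by rewrite sub0r add0r normrN normr1.
- by rewrite subr0 addr0 normr0.
Qed.

Lemma Dmx_row_l1 i : \sum_k `|D i k| <= 2.
Proof.
under eq_bigr do rewrite normr_Dmx.
rewrite big_split /= -[2]/(1 + 1).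
by rewrite lerD // sumr_eq_inj_le1 //; [exact: val_inj | exact: inj_comp succn_inj val_inj].
Qed.

Lemma Dmx_col_l1 j : \sum_k `|D k j| <= 2.
Proof.
under eq_bigr do rewrite normr_Dmx eq_sym [(_.+1 == _)]eq_sym.
by rewrite big_split /= -[2]/(1 + 1) lerD // sumr_eq_inj_le1 //; exact: val_inj.
Qed.

Lemma trDmx_row_l1 i : \sum_k `|D^T i k| <= 2.
Proof. by under eq_bigr do rewrite mxE; exact: Dmx_col_l1. Qed.

Lemma trDmx_col_l1 j : \sum_k `|D^T k j| <= 2.
Proof. by under eq_bigr do rewrite mxE; exact: Dmx_row_l1. Qed.

Lemma Dmx_unit : D \in unitmx.
Proof.
rewrite unitmxE det_trig; first by rewrite big1 ?unitr1 // => i _; rewrite mxE eqxx.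
by apply/is_trig_mxP => i j lt_ij; rewrite DmxE !gtn_eqF ?subrr // ltnS ltnW.
Qed.

Lemma Dmx_conj_invK (A : 'M[R]_N) : D *m (invmx D *m A *m (invmx D)^T) *m D^T = A.
Proof.
have D_unit := Dmx_unit.
by rewrite !mulmxA mulmxV // mul1mx -mulmxA -trmx_mul mulmxV // trmx1 mulmx1.
Qed.

Lemma invDmx_conjK (A : 'M[R]_N) : invmx D *m (D *m A *m D^T) *m (invmx D)^T = A.
Proof.
have D_unit := Dmx_unit.
by rewrite !mulmxA mulVmx // mul1mx -mulmxA -trmx_mul mulVmx // trmx1 mulmx1.
Qed.

Lemma mulDmxE n (F : nat -> nat -> R) i (j : 'I_n) : (forall l, F 0 l = 0) ->
  (D *m \matrix_(k < N, l < n) F k.+1 l.+1) i j = F i.+1 j.+1 - F i j.+1.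
Proof.
move=> F0; rewrite mxE.
under eq_bigr do rewrite DmxE mxE mulrBl !mulr_natl !mulrb.
rewrite sumrB -!big_mkcond (big_ord1_eq _ (fun k => F k.+1 j.+1)) ltn_ord.
case: i => -[|i] lt_iN /=; first by rewrite big_pred0 // F0.
by under eq_bigl do rewrite eqSS; rewrite (big_ord1_eq _ (fun k => F k.+1 j.+1)) ltnW.
Qed.

Lemma mulmx_trDmxE m (F : nat -> nat -> R) (i : 'I_m) j : (forall k, F k 0 = 0) ->
  (\matrix_(k < m, l < N) F k.+1 l.+1 *m D^T) i j = F i.+1 j.+1 - F i.+1 j.
Proof.
move=> F0.
have -> : \matrix_(k < m, l < N) F k.+1 l.+1 *m D^T = (D *m \matrix_(k < N, l < m) F l.+1 k.+1)^T.
  by rewrite trmx_mul; congr (_ *m _); apply/matrixP => k l; rewrite !mxE.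
by rewrite mxE (@mulDmxE _ (fun a b => F b a)).
Qed.

Lemma Dmx_conjE (F : nat -> nat -> R) i j :
  (forall l, F 0 l = 0) -> (forall k, F k 0 = 0) ->
  (D *m \matrix_(k, l < N) F k.+1 l.+1 *m D^T) i j
    = (F i.+1 j.+1 - F i j.+1) - (F i.+1 j - F i j).
Proof.
move=> F0l Fk0.
have -> : D *m \matrix_(k, l < N) F k.+1 l.+1 = \matrix_(k, l) (F k.+1 l.+1 - F k l.+1).
  by apply/matrixP => k l; rewrite mulDmxE // mxE.
by rewrite (@mulmx_trDmxE _ (fun a b => F a b - F a.-1 b)) //= => k; rewrite !Fk0 subr0.
Qed.

End DifferenceMatrix.

Section SigmaDelta.
Variables (R : realType) (N : nat) (Q : R -> R) (X : 'M[R]_N).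

Lemma mxfunE (i j : 'I_N) : mxfun X i.+1 j.+1 = X i j.
Proof. by rewrite /mxfun /= !valK. Qed.

Lemma SDstate_noise_shaping : X - Q2D Q X = Dmx R N *m SDstate Q X *m (Dmx R N)^T.
Proof.
apply/matrixP => i j; rewrite /SDstate Dmx_conjE //; last by case.
by rewrite !mxE /sd_q /= mxfunE; ring.
Qed.

End SigmaDelta.

Section Recovery.
Variables (R : realType) (N : nat) (delta : R).
Local Notation D := (Dmx R N).
Local Notation Di := (invmx (Dmx R N)).

Lemma sd_feasible_state Q (X : 'M[R]_N) :
  mxmax (SDstate Q X) <= delta / 2 -> sd_feasible (Q2D Q X) delta X.
Proof. by rewrite /sd_feasible SDstate_noise_shaping invDmx_conjK. Qed.

Lemma sd_feasible_sub q (Z1 Z2 : 'M[R]_N) i j :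
  sd_feasible q delta Z1 -> sd_feasible q delta Z2 ->
  `|(Di *m (Z1 - Z2) *m Di^T) i j| <= delta.
Proof.
move=> /(le_trans (mxmax_ge _ i j)) feas1 /(le_trans (mxmax_ge _ i j)) feas2.
have -> : Z1 - Z2 = (Z1 - q) - (Z2 - q) by rewrite opprB addrA subrK.
rewrite mulmxBr mulmxBl.
set A := Di *m (Z1 - q) *m Di^T; set B := Di *m (Z2 - q) *m Di^T.
have -> : (A - B) i j = A i j - B i j by rewrite !mxE.
by have := ler_normB (A i j) (B i j); lra.
Qed.

Lemma Dmx_conj_bounds (W : 'M[R]_N) : 0 <= delta -> (forall i j, `|W i j| <= delta) ->
  (forall i j, `|(D^T *m (D *m W *m D^T)) i j| <= 8 * delta) /\
  (forall i j, `|(D *m W *m D^T *m D) i j| <= 8 * delta).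
Proof.
move=> delta_ge0 boundW.
have boundDW i j : `|(D *m W) i j| <= 2 * delta.
  by apply: normr_mulmx_le (@Dmx_row_l1 R N) boundW.
have boundE i j : `|(D *m W *m D^T) i j| <= 4 * delta.
  have two_delta_ge0 : 0 <= 2 * delta by lra.
  by apply: le_trans (normr_mulmx_le_r i j two_delta_ge0 (@trDmx_col_l1 R N) boundDW) _; lra.
have four_delta_ge0 : 0 <= 4 * delta by lra.
split=> i j.
- by apply: le_trans (normr_mulmx_le i j four_delta_ge0 (@trDmx_row_l1 R N) boundE) _; lra.
- by apply: le_trans (normr_mulmx_le_r i j four_delta_ge0 (@Dmx_col_l1 R N) boundE) _; lra.
Qed.

Lemma tv_obj_le_mxl1_le (Z E : 'M[R]_N) (c : R) (s : nat) :
  (forall i j, `|(D^T *m E) i j| <= c) -> (forall i j, `|(E *m D) i j| <= c) ->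
  (mxl0 (D^T *m Z) + mxl0 (Z *m D) <= s)%N -> 0 <= c ->
  tv_obj (Z + E) <= tv_obj Z ->
  mxl1 (D^T *m E) + mxl1 (E *m D) <= 2 * c * s%:R.
Proof.
move=> boundP boundQ sparse c_ge0; rewrite /tv_obj mulmxDr mulmxDl.
have := mxl1D_ge (D^T *m Z) boundP; have := mxl1D_ge (Z *m D) boundQ.
have : 2 * c * (mxl0 (D^T *m Z) + mxl0 (Z *m D))%:R <= 2 * c * s%:R.
  by rewrite ler_wpM2l ?mulr_ge0 // ler_nat.
rewrite natrD; lra.
Qed.

Lemma mxfrob_Dmx_conj_le (W : 'M[R]_N) : 0 <= delta -> (forall i j, `|W i j| <= delta) ->
  mxfrob (D *m W *m D^T) ^+ 2 <= 2 * delta * mxl1 (D^T *m (D *m W *m D^T)).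
Proof.
move=> delta_ge0 boundW; set E := D *m W *m D^T.
rewrite sqr_sqrtr; last by apply: sumr_ge0 => i _; apply: sumr_ge0 => j _; apply: sqr_ge0.
have -> : \sum_i \sum_j E i j ^+ 2 = mxdot E (D *m W *m D^T).
  by apply: eq_bigr => i _; apply: eq_bigr => j _; rewrite expr2.
rewrite mxdot_mulmx; apply: le_trans (mxdot_le_mxl1 _ boundW) _.
rewrite [2 * delta]mulrC -mulrA ler_wpM2l //; apply: mxl1_mulmx_le; exact: Dmx_row_l1.
Qed.

End Recovery.

Lemma sd_tv_recovery_error (R : realType) (N s : nat) (X : 'M[R]_N) (delta : R)
    (Q : R -> R) (Xhat : 'M[R]_N) :
  (mxl0 ((Dmx R N)^T *m X) + mxl0 (X *m Dmx R N) <= s)%N -> 0 <= delta ->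
  mxmax (SDstate Q X) <= delta / 2 ->
  sd_feasible (Q2D Q X) delta Xhat ->
  (forall Z, sd_feasible (Q2D Q X) delta Z -> tv_obj Xhat <= tv_obj Z) ->
  mxfrob (Xhat - X) <= 6 * Num.sqrt s%:R * delta.
Proof.
move=> sparse delta_ge0 stable Xhat_feas Xhat_opt.
have X_feas := sd_feasible_state stable.
set W := invmx (Dmx R N) *m (Xhat - X) *m (invmx (Dmx R N))^T.
have boundW i j : `|W i j| <= delta := sd_feasible_sub i j Xhat_feas X_feas.
have E_conj : Xhat - X = Dmx R N *m W *m (Dmx R N)^T by rewrite Dmx_conj_invK.
have [boundP boundQ] := Dmx_conj_bounds delta_ge0 boundW.
rewrite -E_conj in boundP boundQ.
have l1_le : mxl1 ((Dmx R N)^T *m (Xhat - X)) + mxl1 ((Xhat - X) *m Dmx R N)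
    <= 2 * (8 * delta) * s%:R.
  apply: tv_obj_le_mxl1_le boundP boundQ sparse _ _; first lra.
  by rewrite addrC subrK; exact: Xhat_opt.
have frob_le := mxfrob_Dmx_conj_le delta_ge0 boundW; rewrite -E_conj in frob_le.
rewrite -ler_sqr ?nnegrE ?mulr_ge0 ?sqrtr_ge0 //.
have := sqr_sqrtr (ler0n R s); have := mxl1_ge0 ((Xhat - X) *m Dmx R N).
rewrite !expr2 in frob_le * => L2_ge0 sqrt_sq; nra.
Qed.

Theorem theorem3 (R : realType) :
  exists C : R, 0 < C /\
  forall (N s : nat) (X : 'M[R]_N) (delta a0 : R) (L : nat) (Q : R -> R) (Xhat : 'M[R]_N),
    (forall i j, 0 <= X i j <= 1) ->
    (mxl0 ((Dmx R N)^T *m X) + mxl0 (X *m Dmx R N) <= s)%N ->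
    (s < 2 * N ^ 2)%N ->
    0 < delta ->
    nearest_quantizer (alphabet a0 delta L) Q ->
    mxmax (SDstate Q X) <= delta / 2 ->
    sd_feasible (Q2D Q X) delta Xhat ->
    (forall Z : 'M[R]_N, sd_feasible (Q2D Q X) delta Z -> tv_obj Xhat <= tv_obj Z) ->
    mxfrob (Xhat - X) <= C * Num.sqrt (s%:R) * delta.
Proof.
exists 6; split=> // N s X delta a0 L Q Xhat.
move=> _ sparse _ delta_gt0 _ stable Xhat_feas Xhat_opt.
exact: sd_tv_recovery_error sparse (ltW delta_gt0) stable Xhat_feas Xhat_opt.
Qed.
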